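(* Let $K:X\times X\to\mathbb{C}$ be positive definite and assume $\delta_x\in\mathscr{H}(K)$ for all $x\in X$. Let $F\subset X$ be a nonempty finite subset, $K_F=(K(x,y))_{x,y\in F}$, and let $\lambda$ be any eigenvalue of $K_F$. Then $1\le\lambda\sum_{x\in F}\|\delta_x\|^2_{\mathscr{H}(K)}$.
   Context: $\delta_x$ denotes the function on $X$ equal to $1$ at $x$ and $0$ elsewhere. $\mathscr{H}(K)$ is the reproducing kernel Hilbert space of $K$: the completion of the span of $\{K(\cdot,x)\}$ with $\langle K(\cdot,x),K(\cdot,y)\rangle=K(x,y)$, a space of functions on $X$ with $\langle K(\cdot,x),h\rangle=h(x)$. *)

From HB Require Import structures.
From mathcomp Require Import all_boot all_order all_algebra.
From mathcomp Require Import complex.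
From mathcomp Require Import boolp reals.
Set Implicit Arguments. Unset Strict Implicit. Unset Printing Implicit Defensive.
Import Order.TTheory GRing.Theory Num.Theory.
Local Open Scope ring_scope.
Local Open Scope complex_scope.

Definition pos_def_kernel (R : realType) (X : Type) (K : X -> X -> R[i]) :=
  forall (n : nat) (x : 'I_n -> X) (c : 'I_n -> R[i]),
    0 <= \sum_(i < n) \sum_(j < n) (c i)^* * c j * K (x i) (x j).

Definition delta (R : realType) (X : Type) (x : X) : X -> R[i] :=
  fun y => if pselect (y = x) then 1 else 0.

Definition ksec (R : realType) (X : Type) (K : X -> X -> R[i]) (x : X) : X -> R[i] :=
  fun y => K y x.

(* Such a structure exists and is
   unique by Moore--Aronszajn; the theorem is stated for any such structure. *)
Record RKHS (R : realType) (X : Type) (K : X -> X -> R[i]) := {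
  hmem : (X -> R[i]) -> Prop;
  hip : (X -> R[i]) -> (X -> R[i]) -> R[i];
  mem_ksec : forall x, hmem (ksec K x);
  mem_add : forall f g, hmem f -> hmem g -> hmem (fun y => f y + g y);
  mem_scale : forall (a : R[i]) f, hmem f -> hmem (fun y => a * f y);
  ip_conj : forall f g, hmem f -> hmem g -> hip f g = (hip g f)^*;
  ip_linear : forall (a : R[i]) f g h, hmem f -> hmem g -> hmem h ->
     hip f (fun y => a * g y + h y) = a * hip f g + hip f h;
  ip_ge0 : forall f, hmem f -> 0 <= hip f f;
  ip_eq0 : forall f, hmem f -> hip f f = 0 -> forall y, f y = 0;
  reproducing : forall x h, hmem h -> hip (ksec K x) h = h x;
  complete : forall u : nat -> (X -> R[i]), (forall n, hmem (u n)) ->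
     (forall e : R[i], 0 < e -> exists N : nat, forall m n : nat, (N <= m)%N -> (N <= n)%N ->
        hip (fun y => u m y - u n y) (fun y => u m y - u n y) < e) ->
     exists h, hmem h /\
       (forall e : R[i], 0 < e -> exists N : nat, forall n : nat, (N <= n)%N ->
          hip (fun y => u n y - h y) (fun y => u n y - h y) < e);
  span_dense : forall h, hmem h -> forall e : R[i], 0 < e ->
     exists (n : nat) (x : 'I_n -> X) (a : 'I_n -> R[i]),
       let g := fun y => \sum_(i < n) a i * K y (x i) in
       hip (fun y => h y - g y) (fun y => h y - g y) < e
}.

(* The Gram matrix K_F = (K(x,y))_{x,y in F}, for F enumerated injectively
   by f : 'I_n -> X. *)
Definition gram (R : realType) (X : Type) (K : X -> X -> R[i]) (n : nat)
  (f : 'I_n -> X) : 'M[R[i]]_n := \matrix_(i, j) K (f i) (f j).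

(* Let v be a left eigenvector of K_F for lambda and h := sum_(x in F) conj(v_x) K(., x).
   The reproducing property gives <delta_x, h> = conj(v_x) for x in F and
   ||h||^2 = lambda ||v||^2, so Cauchy-Schwarz yields
   |v_x|^2 <= ||delta_x||^2 lambda ||v||^2.  Summing over F and dividing by
   ||v||^2 > 0 gives the claim. *)

From HB Require Import structures.
From mathcomp Require Import all_boot all_order all_algebra.
From mathcomp Require Import ring.
From mathcomp Require Import complex.
From mathcomp Require Import boolp reals.
Set Implicit Arguments. Unset Strict Implicit. Unset Printing Implicit Defensive.
Import Order.TTheory GRing.Theory Num.Theory.
Local Open Scope ring_scope.
Local Open Scope complex_scope.

Section RKHSInnerProduct.
Variables (R : realType) (X : Type) (K : X -> X -> R[i]) (H : RKHS K).
Local Notation hm := (hmem H).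
Local Notation ip := (hip H).

Lemma hmem0 g : hm g -> hm (fun _ => 0).
Proof.
move=> hg; have := mem_scale 0 hg.
by congr hm; apply: funext => y; rewrite mul0r.
Qed.

Lemma hipDr f g h : hm f -> hm g -> hm h ->
  ip f (fun y => g y + h y) = ip f g + ip f h.
Proof.
move=> hf hg hh; rewrite -[ip f g]mul1r -ip_linear //.
by congr ip; apply: funext => y; rewrite mul1r.
Qed.

Lemma hip0r f g : hm f -> hm g -> ip f (fun _ => 0) = 0.
Proof.
move=> hf hg; have h0 := hmem0 hg; have := hipDr hf h0 h0.
rewrite (_ : (fun _ => 0 + 0) = fun _ => 0); last by apply: funext => y; rewrite addr0.
by rewrite -{1}[ip f _]addr0 => /addrI.
Qed.

Lemma hipZr (a : R[i]) f g : hm f -> hm g -> ip f (fun y => a * g y) = a * ip f g.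
Proof.
move=> hf hg; rewrite -[RHS]addr0 -(hip0r hf hg) -ip_linear //; last exact: hmem0 hg.
by congr ip; apply: funext => y; rewrite addr0.
Qed.

Lemma hipZl (a : R[i]) f g : hm f -> hm g ->
  ip (fun y => a * f y) g = conjc a * ip f g.
Proof.
move=> hf hg; rewrite ip_conj //; last exact: mem_scale.
by rewrite hipZr // rmorphM (ip_conj hf hg).
Qed.

Lemma hipDl f g h : hm f -> hm g -> hm h ->
  ip (fun y => f y + g y) h = ip f h + ip g h.
Proof.
move=> hf hg hh; rewrite ip_conj //; last exact: mem_add.
by rewrite hipDr // rmorphD (ip_conj hf hh) (ip_conj hg hh).
Qed.

Lemma hmem_sum I (r : seq I) (a : I -> R[i]) (g : I -> X -> R[i]) :
  hm (fun _ => 0) -> (forall i, hm (g i)) ->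
  hm (fun y => \sum_(i <- r) a i * g i y).
Proof.
move=> h0 hg; elim: r => [|i r IH].
  by rewrite (_ : (fun y => _) = fun _ => 0) //; apply: funext => y; rewrite big_nil.
rewrite (_ : (fun y => _) = fun y => a i * g i y + \sum_(j <- r) a j * g j y).
  exact: mem_add (mem_scale _ _) IH.
by apply: funext => y; rewrite big_cons.
Qed.

Lemma hip_sumr I (r : seq I) (a : I -> R[i]) f (g : I -> X -> R[i]) :
  hm f -> (forall i, hm (g i)) ->
  ip f (fun y => \sum_(i <- r) a i * g i y) = \sum_(i <- r) a i * ip f (g i).
Proof.
move=> hf hg; have h0 := hmem0 hf; elim: r => [|i r IH].
  rewrite big_nil -[RHS](hip0r hf hf); congr ip.
  by apply: funext => y; rewrite big_nil.
rewrite big_cons -hipZr // -IH -hipDr //.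
- by congr ip; apply: funext => y; rewrite big_cons.
- exact: mem_scale.
- exact: hmem_sum.
Qed.

Lemma kernelJ x y : K x y = conjc (K y x).
Proof.
have kx := mem_ksec H x; have ky := mem_ksec H y.
by rewrite -[K x y](reproducing x ky) ip_conj // (reproducing y kx).
Qed.

Lemma hip_delta_ksec x y :
  hm (delta R x) -> ip (delta R x) (ksec K y) = delta R x y.
Proof.
move=> hx; have ky := mem_ksec H y.
rewrite ip_conj // (reproducing y hx).
by rewrite /delta; case: pselect => ?; [exact: conjc1 | exact: conjc0].
Qed.

Lemma hip_Cauchy_Schwarz f g : hm f -> hm g ->
  ip f g * conjc (ip f g) <= ip f f * ip g g.
Proof.
move=> hf hg; have [gg0|gg_neq0] := eqVneq (ip g g) 0.
  have -> : g = fun _ => 0 by apply: funext; exact: ip_eq0 hg gg0.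
  by have h0 := hmem0 hf; rewrite !(hip0r _ hf) // mul0r mulr0.
have gg_gt0 : 0 < ip g g by rewrite lt_def gg_neq0 ip_ge0.
have hag : hm (fun y => - ip g f * g y) by apply: mem_scale.
have hbf : hm (fun y => ip g g * f y) by apply: mem_scale.
set u := fun y => - ip g f * g y + ip g g * f y.
have hu : hm u by apply: mem_add.
have := ip_ge0 hu.
have -> : ip u u = ip g g * (ip f f * ip g g - ip f g * conjc (ip f g)).
  rewrite {2}/u ip_linear // hipZr // /u !hipDl // !hipZl //.
  rewrite -(ip_conj hg hg) (ip_conj hg hf) rmorphN /= conjcK; ring.
by rewrite pmulr_rge0 // subr_ge0.
Qed.

End RKHSInnerProduct.

Lemma delta_injE (R : realType) (X : Type) n (x : 'I_n -> X) :
  injective x -> forall i j, delta R (x j) (x i) = (i == j)%:R.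
Proof.
move=> x_inj i j; rewrite /delta; case: pselect => [xij|neq_ij] /=.
  by rewrite (x_inj _ _ xij) eqxx.
by case: eqP neq_ij => // ->.
Qed.

Lemma row_normsq_gt0 (R : realType) n (v : 'rV[R[i]]_n) :
  v != 0 -> 0 < \sum_j conjc (v 0 j) * v 0 j.
Proof.
move=> v_neq0; have ge0 j : 0 <= conjc (v 0 j) * v 0 j by rewrite mulrC mulcJ_ge0.
rewrite lt_def sumr_ge0 ?andbT //; apply: contra v_neq0.
move=> /eqP /(psumr_eq0P (fun j _ => ge0 j)) sum0.
apply/eqP/rowP => j; rewrite mxE; apply/eqP.
by have /eqP := sum0 j isT; rewrite mulf_eq0 conjc_eq0 orbb.
Qed.

Section KernelCombination.
Variables (R : realType) (X : Type) (K : X -> X -> R[i]) (H : RKHS K).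
Variables (n : nat) (x : 'I_n -> X).
Local Notation hm := (hmem H).
Local Notation ip := (hip H).

Definition kcomb (c : 'I_n -> R[i]) : X -> R[i] :=
  fun y => \sum_(i < n) c i * ksec K (x i) y.

Lemma mem_kcomb c : hm (fun _ => 0) -> hm (kcomb c).
Proof. by move=> h0; apply: hmem_sum => // i; apply: mem_ksec. Qed.

Lemma hip_delta_kcomb c j : injective x -> hm (delta R (x j)) ->
  ip (delta R (x j)) (kcomb c) = c j.
Proof.
move=> x_inj hxj; rewrite /kcomb hip_sumr //; last by move=> i; apply: mem_ksec.
rewrite (bigD1 j) //= big1 => [|i /negbTE neq_ij];
  by rewrite hip_delta_ksec // delta_injE // ?eqxx ?neq_ij ?mulr1 ?mulr0 ?addr0.
Qed.

Lemma hip_kcomb c : hm (fun _ => 0) ->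
  ip (kcomb c) (kcomb c) = \sum_(k < n) c k * conjc (kcomb c (x k)).
Proof.
move=> h0; have hc := mem_kcomb c h0.
rewrite {2}/kcomb hip_sumr //; last by move=> i; apply: mem_ksec.
apply: eq_bigr => k _; rewrite ip_conj //; last exact: mem_ksec.
by rewrite reproducing.
Qed.

Lemma kcomb_eigenvector (v : 'rV_n) (lambda : R[i]) :
  v *m gram K x = lambda *: v ->
  forall j, kcomb (fun i => conjc (v 0 i)) (x j) = conjc (lambda * v 0 j).
Proof.
move=> v_eigen j; have := congr1 (fun M : 'rV_n => M 0 j) v_eigen; rewrite !mxE => <-.
rewrite rmorph_sum; apply: eq_bigr => i _.
by rewrite mxE rmorphM /= /ksec (kernelJ H).
Qed.

End KernelCombination.

Theorem lemma8p1 (R : realType) (X : Type) (K : X -> X -> R[i])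
  (HK : pos_def_kernel K) (H : RKHS K)
  (Hdelta : forall x : X, hmem H (delta R x))
  (n : nat) (n_gt0 : (0 < n)%N) (f : 'I_n -> X) (f_inj : injective f)
  (lambda : R[i]) (Hlambda : eigenvalue (gram K f) lambda) :
  1 <= lambda * \sum_(i < n) hip H (delta R (f i)) (delta R (f i)).
Proof.
move/eigenvalueP: Hlambda => [v v_eigen v_neq0].
have h0 : hmem H (fun _ => 0) := hmem0 (mem_ksec H (f (Ordinal n_gt0))).
set h := kcomb K f (fun i => conjc (v 0 i)).
set C := \sum_j conjc (v 0 j) * v 0 j.
have h_norm : hip H h h = lambda * C.
  rewrite hip_kcomb // /C mulr_sumr; apply: eq_bigr => k _.
  by rewrite (kcomb_eigenvector H v_eigen) conjcK mulrCA.
have hh : hmem H h by exact: mem_kcomb.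
have coord_le j :
    conjc (v 0 j) * v 0 j <= hip H (delta R (f j)) (delta R (f j)) * (lambda * C).
  have := hip_Cauchy_Schwarz (Hdelta (f j)) hh.
  by rewrite (hip_delta_kcomb _ f_inj) // conjcK h_norm.
have : C <= (\sum_j hip H (delta R (f j)) (delta R (f j))) * (lambda * C).
  by rewrite mulr_suml; apply: ler_sum => j _; apply: coord_le.
by rewrite mulrCA mulrA ler_pMl // row_normsq_gt0.
Qed.
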